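(* Let $X$ be a real Banach space and $W,Y$ closed subspaces with $W\subseteq Y\subseteq X$. If $Y$ has property-$(HB)$ in $X$, then $Y/W$ has property-$(HB)$ in $X/W$.
   Context: For a closed subspace $V$ of a Banach space $E$, $V^\perp=\{e^*\in E^*:e^*|_V=0\}$. $V$ has property-$(HB)$ in $E$ if there is a linear projection $P$ on $E^*$ with range $V^\perp$ and $\|P\|=1$ such that, writing $G=(I-P)(E^* )$, for every $e^*=v^\#+v^\perp$ with $v^\#\in G$, $0\neq v^\perp\in V^\perp$, one has $\|e^*\|>\|v^\#\|$ and $\|e^*\|\ge\|v^\perp\|$. $Y/W$ is regarded as a subspace of $X/W$ with the quotient norm. *)

From HB Require Import structures.
From mathcomp Require Import all_boot all_order all_algebra.
From mathcomp Require Import all_classical all_reals all_analysis.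
Set Implicit Arguments. Unset Strict Implicit. Unset Printing Implicit Defensive.
Import Order.TTheory GRing.Theory Num.Theory.
Local Open Scope classical_set_scope.
Local Open Scope ring_scope.

Section HBDefs.
Variables (R : realType) (V : lmodType R).

Definition is_subspace (S : set V) : Prop :=
  S 0 /\ forall (a : R) x y, S x -> S y -> S (a *: x + y).

Definition is_linfun (f : V -> R) : Prop :=
  forall (a : R) x y, f (a *: x + y) = a * f x + f y.

Definition dual (N : V -> R) : set (V -> R) :=
  [set f | is_linfun f /\ exists C : R, forall x, `|f x| <= C * N x].

Definition dnorm (N : V -> R) (f : V -> R) : R :=
  sup [set `|f x| | x in [set x | N x <= 1]].

Definition perp (N : V -> R) (S : set V) : set (V -> R) :=
  [set f | dual N f /\ forall v, S v -> f v = 0].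

Definition opnorm (N : V -> R) (P : (V -> R) -> (V -> R)) : R :=
  sup [set dnorm N (P f) | f in [set f | dual N f /\ dnorm N f <= 1]].

Definition propHB (N : V -> R) (S : set V) : Prop :=
  exists P : (V -> R) -> (V -> R),
    [/\ (forall f, dual N f -> dual N (P f)),
        (forall (a : R) f g, dual N f -> dual N g ->
            P (fun x => a * f x + g x) = (fun x => a * P f x + P g x)),
        (forall f, dual N f -> P (P f) = P f),
        P @` (dual N) = perp N S &
        opnorm N P = 1] /\
        (let G := [set g | exists2 f, dual N f & g = (fun x => f x - P f x)] in
        forall g p, G g -> perp N S p -> p <> (fun _ => 0) ->
          dnorm N g < dnorm N (fun x => g x + p x) /\
          dnorm N p <= dnorm N (fun x => g x + p x)).
End HBDefs.

(* Quotient norm of X/W, viewed as a seminorm on X. *)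
Definition qnorm (R : realType) (X : normedModType R) (W : set X) (x : X) : R :=
  inf [set `|x - w| | w in W].

From HB Require Import structures.
From mathcomp Require Import all_boot all_order all_algebra.
From mathcomp Require Import all_classical all_reals all_analysis.
From mathcomp Require Import ring.
Import Order.TTheory GRing.Theory Num.Theory.
Local Open Scope classical_set_scope.
Local Open Scope ring_scope.
Set Implicit Arguments. Unset Strict Implicit.

(* The dual of X/W is the annihilator of W in X^*, isometrically: a functional
   bounded for the quotient seminorm is a bounded functional vanishing on W,
   and both dual norms agree on it.  Since W <= Y, the annihilator of Y/W is
   the same space Y^perp, which lies inside W^perp; so the projection P
   witnessing (HB) for Y, restricted to W^perp, has the same range, is still
   a contraction of norm one (its range is fixed by P), and inherits the two
   norm inequalities verbatim. *)

Section Functionals.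
Variables (R : realType) (V : lmodType R).
Implicit Types (N : V -> R) (f g : V -> R).

Lemma linfun0 f : is_linfun f -> f 0 = 0.
Proof.
move=> hf; have /eqP := hf 1 0 0; rewrite scale1r addr0 mul1r -subr_eq subrr.
by rewrite eq_sym => /eqP.
Qed.

Lemma linfunZ f a x : is_linfun f -> f (a *: x) = a * f x.
Proof. by move=> hf; rewrite -[a *: x]addr0 hf linfun0 // addr0. Qed.

Lemma linfunB f x y : is_linfun f -> f (x - y) = f x - f y.
Proof. by move=> hf; rewrite addrC -scaleN1r hf mulN1r addrC. Qed.

Lemma dual_comb N f g a : dual N f -> dual N g -> dual N (fun x => a * f x + g x).
Proof.
move=> [hf [C hC]] [hg [D hD]]; split=> [b x y|]; first by rewrite hf hg; ring.
exists (`|a| * C + D) => x; rewrite mulrDl -mulrA.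
by apply: (le_trans (ler_normD _ _)); rewrite normrM lerD // ler_wpM2l.
Qed.

Lemma opnorm_eq1_contract N (P : (V -> R) -> V -> R) f :
  opnorm N P = 1 -> dual N f -> dnorm N f <= 1 -> dnorm N (P f) <= 1.
Proof.
(* [sup] is [0] on sets without supremum, so [opnorm N P = 1] forces boundedness. *)
rewrite /opnorm => P1 hf hf1; have hsup : has_sup [set dnorm N (P g) | g in
    [set g | dual N g /\ dnorm N g <= 1]].
  by apply: contrapT => /sup_out; rewrite P1 => /eqP; rewrite oner_eq0.
by rewrite -P1; apply: (ub_le_sup hsup.2); exists f.
Qed.

End Functionals.

Section Transfer.
Variables (R : realType) (V : lmodType R) (N M : V -> R) (S : set V).
Hypothesis dualMN : forall f, dual M f -> dual N f.
Hypothesis perpN_dualM : forall f, perp N S f -> dual M f.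
Hypothesis dnormMN : forall f, dual M f -> dnorm M f = dnorm N f.

Lemma perpMN : perp M S = perp N S.
Proof.
apply/seteqP; split=> f [hf fS]; split=> //; first exact: dualMN.
exact: perpN_dualM.
Qed.

Lemma opnorm_transfer (P : (V -> R) -> V -> R) :
  (forall f, dual N f -> perp N S (P f)) ->
  (forall f, dual N f -> P (P f) = P f) ->
  (forall f, dual N f -> dnorm N f <= 1 -> dnorm N (P f) <= 1) ->
  opnorm M P = opnorm N P.
Proof.
move=> Pperp Pidem Pcontr; congr sup; apply/seteqP; split.
  move=> _ [f [hf hf1] <-]; have hfN := dualMN hf.
  exists f; first by split; rewrite // -dnormMN.
  by rewrite dnormMN //; apply/perpN_dualM/Pperp.
move=> _ [f [hf hf1] <-]; have hPf := perpN_dualM (Pperp f hf).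
exists (P f); first by split; rewrite // dnormMN // Pcontr.
by rewrite Pidem // dnormMN.
Qed.

Lemma propHB_transfer : propHB N S -> propHB M S.
Proof.
move=> [P [[Pdual Plin Pidem Pimg P1] hHB]].
have Pperp f : dual N f -> perp N S (P f) by move=> hf; rewrite -Pimg; exists f.
have PdualM f : dual M f -> dual M (P f) by move/dualMN/Pperp/perpN_dualM.
exists P; split; first split.
- exact: PdualM.
- by move=> a f g /dualMN hf /dualMN hg; apply: Plin.
- by move=> f /dualMN; apply: Pidem.
- rewrite perpMN; apply/seteqP; split=> [_ [f /dualMN hf <-]|p hp].
    exact: Pperp.
  have [g hg gp] : (P @` dual N) p by rewrite Pimg.
  by exists p; [exact: perpN_dualM | rewrite -gp Pidem].
- by rewrite opnorm_transfer // => f; apply: opnorm_eq1_contract.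
move=> _ g p [f hf ->]; rewrite perpMN => hp p0.
have hg : dual M (fun x => f x - P f x).
  have := dual_comb (-1) (PdualM f hf) hf.
  by congr dual; apply: funext => x; rewrite mulN1r addrC.
have hgp : dual M (fun x => f x - P f x + p x).
  have := dual_comb 1 hg (perpN_dualM hp).
  by congr dual; apply: funext => x; rewrite mul1r.
rewrite !dnormMN //; last exact: perpN_dualM.
by apply: hHB => //; exists f => //; exact: dualMN.
Qed.

End Transfer.

Section NormedDual.
Variables (R : realType) (X : normedModType R).
Local Notation nX := (fun x : X => `|x|).
Implicit Types (f : X -> R) (x : X).

Lemma dual_has_ubound f :
  dual nX f -> has_ubound [set `|f x| | x in [set x | `|x| <= 1]].
Proof.
move=> [_ [C hC]]; exists `|C| => _ [x /= x1 <-].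
apply: (le_trans (hC x)); apply: (le_trans (ler_norm _)).
by rewrite normrM normr_id ler_piMr.
Qed.

Lemma dnorm_ge0 f : dual nX f -> 0 <= dnorm nX f.
Proof.
move=> hf; apply: (ub_le_sup (dual_has_ubound hf)).
by exists 0; rewrite /= ?normr0 // linfun0 ?normr0 //; case: hf.
Qed.

Lemma dual_le_dnorm f x : dual nX f -> `|f x| <= dnorm nX f * `|x|.
Proof.
move=> hf; have [->|x0] := eqVneq x 0.
  by rewrite linfun0 ?normr0 ?mulr0 //; case: hf.
have nx0 : 0 < `|x| by rewrite normr_gt0.
rewrite -ler_pdivrMr // mulrC -[`|x|^-1]ger0_norm ?invr_ge0 ?normr_ge0 //.
rewrite -normrM -linfunZ; last by case: hf.
apply: (ub_le_sup (dual_has_ubound hf)); exists (`|x|^-1 *: x) => //=.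
by rewrite normrZ normrV ?unitfE ?gt_eqF // normr_id mulVf ?gt_eqF.
Qed.

Section QuotientNorm.
Variable W : set X.
Hypothesis W0 : W 0.

Lemma qnorm_le x w : W w -> qnorm W x <= `|x - w|.
Proof. by move=> Ww; apply: ge_inf; [exists 0 => _ [? _ <-] | exists w]. Qed.

Lemma qnorm_le_norm x : qnorm W x <= `|x|.
Proof. by rewrite -[x in `|x|]subr0 qnorm_le. Qed.

Lemma le_qnorm a c x :
  0 <= c -> (forall w, W w -> a <= c * `|x - w|) -> a <= c * qnorm W x.
Proof.
rewrite le_eqVlt => /orP[/eqP <- /(_ 0 W0)|c0 ha]; first by rewrite !mul0r.
rewrite mulrC -ler_pdivrMr //; apply: lb_le_inf; first by exists `|x - 0|, 0.
by move=> _ [w Ww <-]; rewrite ler_pdivrMr // mulrC ha.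
Qed.

Lemma qnorm_ge0 x : 0 <= qnorm W x.
Proof. by rewrite -[qnorm W x]mul1r; apply: le_qnorm. Qed.

Lemma qnorm_eq0 w : W w -> qnorm W w = 0.
Proof.
by move=> Ww; apply/eqP; rewrite eq_le qnorm_ge0 andbT -(normr0 X) -(subrr w) qnorm_le.
Qed.

Lemma dual_le_dnorm_qnorm f x :
  dual nX f -> (forall w, W w -> f w = 0) -> `|f x| <= dnorm nX f * qnorm W x.
Proof.
move=> hf fW; apply: le_qnorm; first exact: dnorm_ge0.
by move=> w Ww; rewrite -[f x]subr0 -(fW w Ww) -linfunB ?dual_le_dnorm //; case: hf.
Qed.

Lemma dual_qnormE f :
  dual (qnorm W) f <-> dual nX f /\ forall w, W w -> f w = 0.
Proof.
split=> [[hf [C hC]]|[hf fW]]; last first.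
  by split; [case: hf | exists (dnorm nX f) => x; apply: dual_le_dnorm_qnorm].
split=> [|w Ww]; last first.
  by apply/eqP; rewrite -normr_le0 (le_trans (hC w)) // qnorm_eq0 // mulr0.
split=> //; exists `|C| => x; apply: (le_trans (hC x)).
apply: (le_trans (ler_wpM2r (qnorm_ge0 x) (ler_norm C))).
by rewrite ler_wpM2l // qnorm_le_norm.
Qed.

Lemma dnorm_qnorm f : dual (qnorm W) f -> dnorm (qnorm W) f = dnorm nX f.
Proof.
move=> /dual_qnormE[hf fW].
have ub : ubound [set `|f x| | x in [set x | qnorm W x <= 1]] (dnorm nX f).
  move=> _ [x /= x1 <-]; apply: (le_trans (dual_le_dnorm_qnorm x hf fW)).
  by rewrite ler_piMr // dnorm_ge0.
have x0_in : [set x | qnorm W x <= 1] 0 by rewrite /= qnorm_eq0.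
apply/eqP; rewrite eq_le; apply/andP; split.
  by apply: ge_sup => //; exists `|f 0|, 0.
apply: sup_le; last by split; [exists `|f 0|, 0 | exists (dnorm nX f)].
  move=> _ [x /= x1 <-]; exists `|f x|; split => //; exists x => //=.
  exact: le_trans (qnorm_le_norm x) x1.
by exists `|f 0|, 0 => //=; rewrite normr0.
Qed.

End QuotientNorm.
End NormedDual.

Unset Implicit Arguments.
Theorem theorem3p10 (R : realType) (X : completeNormedModType R)
  (W Y : set X)
  (hW : is_subspace W) (hWc : closed W)
  (hY : is_subspace Y) (hYc : closed Y)
  (hWY : W `<=` Y) :
  propHB (fun x : X => `|x|) Y -> propHB (qnorm W) Y.
Proof.
have W0 : W 0 := hW.1.
apply: propHB_transfer => [f /(dual_qnormE W0)[] // | p [hp pY] | f].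
  by apply/(dual_qnormE W0); split=> // w /hWY /pY.
exact: dnorm_qnorm.
Qed.
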